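(* Let $t\in\mathfrak{T}_2$ with $t>0$ on $\mathbb{T}^2$ and $n_1(t)\ge1$. Then for every $z\in\mathbb{A}_{\sigma_1(t)}$, $$\Re\,\Gamma_zt\ge\tfrac12\min t\ \text{ on }\mathbb{T},\qquad \|\Gamma_zt\|_\infty\le\|t\|_\infty+\tfrac12\min t,\qquad \rho(\Gamma_zt)\ge\rho(t)/(2e).$$
   Context: $\mathbb{T}=\mathbb{R}/\mathbb{Z}$, $e_j(x)=e^{2\pi i jx}$, $e_{(j,k)}(x,y)=e_j(x)e_k(y)$. $\mathfrak{T}_d$: trigonometric polynomials on $\mathbb{T}^d$. For $t\in\mathfrak{T}_2$: $\|\widehat t\|_1=\sum_{(j,k)}|\widehat t(j,k)|$, $n_1(t)=\max\{|j|:\widehat t(j,k)\ne0\text{ for some }k\}$, $\rho(t)=\min\{1,\min t/(2e\|\widehat t\|_1)\}$, $\sigma_1(t)=\rho(t)/n_1(t)$. For $z\in\mathbb{C}\setminus\{0\}$, $\Gamma_z:\mathfrak{T}_2\to\mathfrak{T}_1$ is the linear map with $\Gamma_ze_{(j,k)}=z^je_k$. For $s\in\mathfrak{T}_1$ with $\Re s>0$, $\rho(s)=\min\{1,\min\Re s/(2e\|\widehat s\|_1)\}$ with $\|\widehat s\|_1=\sum_k|\widehat s(k)|$. $\mathbb{A}_\sigma=\{z:e^{-\sigma}\le|z|\le e^\sigma\}$. *)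

From Stdlib Require Import Reals Lra ZArith List.
Open Scope R_scope.

Definition Cx := (R * R)%type.
Definition Cre (z : Cx) : R := fst z.
Definition Cim (z : Cx) : R := snd z.
Definition C0 : Cx := (0, 0).
Definition C1 : Cx := (1, 0).
Definition Cadd (z w : Cx) : Cx := (fst z + fst w, snd z + snd w).
Definition Cmul (z w : Cx) : Cx :=
  (fst z * fst w - snd z * snd w, fst z * snd w + snd z * fst w).
Definition Cmod (z : Cx) : R := sqrt (fst z ^ 2 + snd z ^ 2).
Definition Cinv (z : Cx) : Cx :=
  (fst z / (fst z ^ 2 + snd z ^ 2), - snd z / (fst z ^ 2 + snd z ^ 2)).
Fixpoint Cpown (z : Cx) (n : nat) : Cx :=
  match n with O => C1 | S n' => Cmul z (Cpown z n') end.
(** integer powers z^j (z <> 0 for negative j) *)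
Definition Cpow (z : Cx) (j : Z) : Cx :=
  match j with
  | Z0 => C1
  | Zpos p => Cpown z (Pos.to_nat p)
  | Zneg p => Cinv (Cpown z (Pos.to_nat p))
  end.

Definition ech (j : Z) (x : R) : Cx :=
  (cos (2 * PI * IZR j * x), sin (2 * PI * IZR j * x)).

Definition zrange (N : nat) : list Z :=
  map (fun i => (Z.of_nat i - Z.of_nat N)%Z) (seq 0 (2 * N + 1)).
Definition sumZ (N : nat) (f : Z -> R) : R :=
  fold_right (fun j acc => f j + acc) 0 (zrange N).
Definition CsumZ (N : nat) (f : Z -> Cx) : Cx :=
  fold_right (fun j acc => Cadd (f j) acc) C0 (zrange N).

(** A trigonometric polynomial on T^2 is given by its Fourier coefficients
    c : Z -> Z -> Cx, supported in the box [-N,N]^2. *)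
Definition supported2 (N : nat) (c : Z -> Z -> Cx) : Prop :=
  forall j k, (Z.of_nat N < Z.abs j \/ Z.of_nat N < Z.abs k)%Z -> c j k = C0.
Definition supported1 (N : nat) (d : Z -> Cx) : Prop :=
  forall k, (Z.of_nat N < Z.abs k)%Z -> d k = C0.

Definition eval2 (N : nat) (c : Z -> Z -> Cx) (x y : R) : Cx :=
  CsumZ N (fun j => CsumZ N (fun k => Cmul (c j k) (Cmul (ech j x) (ech k y)))).
Definition eval1 (N : nat) (d : Z -> Cx) (x : R) : Cx :=
  CsumZ N (fun k => Cmul (d k) (ech k x)).

Definition l1norm2 (N : nat) (c : Z -> Z -> Cx) : R :=
  sumZ N (fun j => sumZ N (fun k => Cmod (c j k))).
Definition l1norm1 (N : nat) (d : Z -> Cx) : R :=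
  sumZ N (fun k => Cmod (d k)).

Definition is_n1 (c : Z -> Z -> Cx) (n : Z) : Prop :=
  (exists j k, Z.abs j = n /\ c j k <> C0) /\
  (forall j k, c j k <> C0 -> (Z.abs j <= n)%Z).

(** Gamma_z : e_(j,k) |-> z^j e_k, acting on coefficients *)
Definition Gamma (z : Cx) (N : nat) (c : Z -> Z -> Cx) : Z -> Cx :=
  fun k => CsumZ N (fun j => Cmul (Cpow z j) (c j k)).

(** minima / suprema over T^2 and T (functions on R, 1-periodic) *)
Definition is_min2 (f : R -> R -> R) (m : R) : Prop :=
  (forall x y, m <= f x y) /\ (exists x y, f x y = m).
Definition is_min1 (f : R -> R) (m : R) : Prop :=
  (forall x, m <= f x) /\ (exists x, f x = m).
Definition is_sup2 (f : R -> R -> R) (M : R) : Prop :=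
  is_lub (fun r => exists x y, r = f x y) M.

Definition rho_of (minval l1 : R) : R := Rmin 1 (minval / (2 * exp 1 * l1)).

(* Write z = r (cos phi, sin phi) with r > 0 and set x0 = phi / (2 pi).  Then
   z^j = r^j e_j(x0), so for t = sum c(j,k) e_(j,k)

       Gamma_z t (y) = t(x0, y) + sum_(j,k) (r^j - 1) c(j,k) e_j(x0) e_k(y),

   i.e. Gamma_z t is the slice t(x0, .) plus a perturbation.  If |ln r| <= sigma_1(t)
   and |j| <= n_1(t) on the support of c, then |j ln r| <= rho(t) <= 1, whence
   |r^j - 1| <= e rho(t) <= min t / (2 ||t^||_1) and r^j <= e.  Summing, the
   perturbation has modulus at most (min t)/2, and ||(Gamma_z t)^||_1 <= e ||t^||_1;
   the three claimed estimates follow directly. *)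

From Pilot Require Import Defs.
From Stdlib Require Import Reals ZArith Lra List Classical.
From Coquelicot Require Complex Rcomplements.
Open Scope R_scope.

Definition csum (l : list Z) (f : Z -> Cx) : Cx :=
  fold_right (fun j acc => Cadd (f j) acc) C0 l.
Definition rsum (l : list Z) (f : Z -> R) : R :=
  fold_right (fun j acc => f j + acc) 0 l.

Lemma csum_ext l f g : (forall j, f j = g j) -> csum l f = csum l g.
Proof. intro H; induction l as [|a l IH]; simpl; [reflexivity | now rewrite H, IH]. Qed.

Lemma csum_add l f g : csum l (fun j => Cadd (f j) (g j)) = Cadd (csum l f) (csum l g).
Proof.
  induction l as [|a l IH]; simpl.
  - unfold Cadd, C0; simpl; f_equal; ring.
  - rewrite IH; unfold Cadd; simpl; f_equal; ring.
Qed.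

Lemma csum_mulr l f w : Cmul (csum l f) w = csum l (fun j => Cmul (f j) w).
Proof.
  induction l as [|a l IH]; simpl.
  - unfold Cmul, C0; simpl; f_equal; ring.
  - rewrite <- IH; unfold Cadd, Cmul; simpl; f_equal; ring.
Qed.

Lemma csum_swap l1 l2 (F : Z -> Z -> Cx) :
  csum l1 (fun k => csum l2 (fun j => F j k)) = csum l2 (fun j => csum l1 (fun k => F j k)).
Proof.
  induction l1 as [|a l1 IH]; simpl.
  - induction l2 as [|b l2 IH2]; simpl; [reflexivity|].
    rewrite <- IH2; unfold Cadd, C0; simpl; f_equal; ring.
  - now rewrite IH, <- csum_add.
Qed.

Lemma rsum_add l f g : rsum l (fun j => f j + g j) = rsum l f + rsum l g.
Proof. induction l as [|a l IH]; simpl; [ring | rewrite IH; ring]. Qed.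

Lemma rsum_swap l1 l2 (F : Z -> Z -> R) :
  rsum l1 (fun k => rsum l2 (fun j => F j k)) = rsum l2 (fun j => rsum l1 (fun k => F j k)).
Proof.
  induction l1 as [|a l1 IH]; simpl.
  - induction l2 as [|b l2 IH2]; simpl; [reflexivity | rewrite <- IH2; ring].
  - now rewrite IH, <- rsum_add.
Qed.

Lemma rsum_le l f g : (forall j, f j <= g j) -> rsum l f <= rsum l g.
Proof. intro H; induction l as [|a l IH]; simpl; [lra | specialize (H a); lra]. Qed.

Lemma rsum_scal l a f : rsum l (fun j => a * f j) = a * rsum l f.
Proof. induction l as [|b l IH]; simpl; [ring | rewrite IH; ring]. Qed.

(** Complex modulus: the pairs [Cx] are Coquelicot's complex numbers, so the
    basic properties of [Cmod] are imported from there. *)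
Lemma Cmod_ge0 z : 0 <= Cmod z.
Proof. apply Complex.Cmod_ge_0. Qed.

Lemma Cmod_add z w : Cmod (Cadd z w) <= Cmod z + Cmod w.
Proof. apply (Complex.Cmod_triangle z w). Qed.

Lemma Cmod_mul z w : Cmod (Cmul z w) = Cmod z * Cmod w.
Proof. apply (Complex.Cmod_mult z w). Qed.

Lemma Cmod_C0 : Cmod C0 = 0.
Proof. apply Complex.Cmod_0. Qed.

Lemma Rabs_Cre_le z : Rabs (Cre z) <= Cmod z.
Proof. apply (Complex.re_le_Cmod z). Qed.

Lemma Cre_le_Cmod z : Cre z <= Cmod z.
Proof. eapply Rle_trans; [apply Rle_abs | apply Rabs_Cre_le]. Qed.

Lemma Cmod_csum l f : Cmod (csum l f) <= rsum l (fun j => Cmod (f j)).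
Proof.
  induction l as [|a l IH]; simpl.
  - rewrite Cmod_C0; lra.
  - eapply Rle_trans; [apply Cmod_add | lra].
Qed.

Definition scal (a : R) (w : Cx) : Cx := (a * fst w, a * snd w).

Lemma Cmod_scal a w : Cmod (scal a w) = Rabs a * Cmod w.
Proof.
  replace (scal a w) with (Cmul (a, 0) w) by (unfold scal, Cmul; simpl; f_equal; ring).
  rewrite Cmod_mul, (Complex.Cmod_R a : Cmod (a, 0) = Rabs a); reflexivity.
Qed.

Lemma Cmod_ech j x : Cmod (ech j x) = 1.
Proof.
  unfold Cmod, ech; simpl; rewrite !Rmult_1_r, Rplus_comm.
  rewrite <- !Rsqr_def, sin2_cos2; apply sqrt_1.
Qed.

Lemma polar z : 0 < Cmod z -> exists phi, z = (Cmod z * cos phi, Cmod z * sin phi).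
Proof.
  intro Hr. destruct z as [u v]. set (r := Cmod (u, v)) in *.
  assert (Hr2 : r * r = u * u + v * v).
  { unfold r, Cmod; simpl. rewrite sqrt_sqrt; [ring | nra]. }
  set (a := u / r). set (b := v / r).
  assert (Hab : a * a + b * b = 1).
  { unfold a, b.
    replace (u / r * (u / r) + v / r * (v / r)) with ((u * u + v * v) / (r * r)) by (field; lra).
    rewrite <- Hr2; field; lra. }
  assert (Hs : sqrt (1 - a²) = Rabs b).
  { replace (1 - a²) with (b * b) by (unfold Rsqr; lra). apply sqrt_Rsqr_abs. }
  assert (Hu : u = r * a) by (unfold a; field; lra).
  assert (Hv : v = r * b) by (unfold b; field; lra).
  destruct (Rle_dec 0 b) as [Hb | Hb].
  - exists (acos a). rewrite cos_acos, sin_acos, Hs, Rabs_pos_eq by nra.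
    now rewrite <- Hu, <- Hv.
  - exists (- acos a). rewrite cos_neg, sin_neg, cos_acos, sin_acos, Hs by nra.
    rewrite Rabs_left by lra. rewrite <- Hu. f_equal; lra.
Qed.

Lemma Cpown_polar r phi n :
  Cpown (r * cos phi, r * sin phi) n = (r ^ n * cos (INR n * phi), r ^ n * sin (INR n * phi)).
Proof.
  induction n as [|n IH].
  - simpl. rewrite Rmult_0_l, cos_0, sin_0. unfold Defs.C1; f_equal; ring.
  - simpl Cpown. rewrite IH, S_INR.
    replace ((INR n + 1) * phi) with (phi + INR n * phi) by ring.
    rewrite cos_plus, sin_plus. unfold Cmul; simpl; f_equal; ring.
Qed.

Lemma ech_polar j phi : ech j (phi / (2 * PI)) = (cos (IZR j * phi), sin (IZR j * phi)).
Proof.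
  unfold ech. replace (2 * PI * IZR j * (phi / (2 * PI))) with (IZR j * phi); [reflexivity|].
  pose proof PI_RGT_0; field; lra.
Qed.

Lemma Cpow_polar r phi j : 0 < r ->
  Cpow (r * cos phi, r * sin phi) j = scal (exp (IZR j * ln r)) (ech j (phi / (2 * PI))).
Proof.
  intro Hr. rewrite ech_polar. unfold scal; simpl.
  destruct j as [|p|p]; simpl Cpow.
  - rewrite !Rmult_0_l, exp_0, cos_0, sin_0. unfold Defs.C1; f_equal; ring.
  - rewrite Cpown_polar, <- (Rpower_pow _ _ Hr), INR_IPR. reflexivity.
  - rewrite Cpown_polar, <- (Rpower_pow _ _ Hr), INR_IPR. unfold Rpower.
    change (IZR (Z.neg p)) with (- IPR p). set (q := IPR p).
    set (E := exp (q * ln r)). assert (HE : 0 < E) by apply exp_pos.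
    unfold Cinv; simpl.
    assert (Hc : E * cos (q * phi) * (E * cos (q * phi) * 1)
                 + E * sin (q * phi) * (E * sin (q * phi) * 1) = E * E).
    { pose proof (sin2_cos2 (q * phi)) as H; unfold Rsqr in H; nra. }
    rewrite Hc, !Ropp_mult_distr_l_reverse, exp_Ropp, cos_neg, sin_neg.
    fold E. f_equal; field; lra.
Qed.

Lemma exp_near_zero u : Rabs u <= 1 -> Rabs (exp u - 1) <= exp 1 * Rabs u /\ exp u <= exp 1.
Proof.
  intro Hu.
  assert (He1 : exp u <= exp 1).
  { destruct (Req_dec u 1) as [-> | Hne]; [lra|].
    left; apply exp_increasing; pose proof (Rle_abs u); lra. }
  split; [|exact He1].
  pose proof (exp_ineq1_le u). pose proof (exp_ineq1_le (- u)) as Hm.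
  rewrite exp_Ropp in Hm. pose proof (exp_pos u).
  destruct (Rle_dec 0 u) as [Hp | Hn].
  - assert (exp u - 1 <= u * exp u).
    { apply Rmult_le_compat_l with (r := exp u) in Hm; [|lra].
      rewrite Rinv_r in Hm by lra. nra. }
    rewrite !Rabs_pos_eq by lra. nra.
  - assert (exp u <= 1) by (rewrite <- exp_0; left; apply exp_increasing; lra).
    rewrite Rabs_left1, Rabs_left by lra. pose proof (exp_ineq1_le 1). nra.
Qed.

Lemma annulus_ln r sigma : exp (- sigma) <= r <= exp sigma -> 0 < r /\ Rabs (ln r) <= sigma.
Proof.
  intro Hr. pose proof (exp_pos (- sigma)).
  assert (Hr0 : 0 < r) by lra. split; [exact Hr0|].
  apply Rabs_le; split.
  - destruct (Rlt_le_dec (ln r) (- sigma)) as [Hlt | ]; [|lra].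
    apply exp_increasing in Hlt; rewrite exp_ln in Hlt; lra.
  - destruct (Rlt_le_dec sigma (ln r)) as [Hlt | ]; [|lra].
    apply exp_increasing in Hlt; rewrite exp_ln in Hlt; lra.
Qed.

Lemma radial_factor_bounds (j n : Z) (r rho : R) :
  (Z.abs j <= n)%Z -> (1 <= n)%Z -> rho <= 1 -> Rabs (ln r) <= rho / IZR n ->
  Rabs (exp (IZR j * ln r) - 1) <= exp 1 * rho /\ exp (IZR j * ln r) <= exp 1.
Proof.
  intros Hj Hn Hrho Hl. apply IZR_le in Hj, Hn. rewrite abs_IZR in Hj.
  assert (Hu : Rabs (IZR j * ln r) <= rho).
  { rewrite Rabs_mult. replace rho with (IZR n * (rho / IZR n)) by (field; lra).
    apply Rmult_le_compat; [apply Rabs_pos | apply Rabs_pos | exact Hj | exact Hl]. }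
  destruct (exp_near_zero (IZR j * ln r)) as [H1 H2]; [lra|].
  split; [|exact H2]. eapply Rle_trans; [exact H1|].
  apply Rmult_le_compat_l; [left; apply exp_pos | exact Hu].
Qed.

Lemma rho_of_bounds m L : 0 < m -> 0 < L ->
  0 <= rho_of m L <= 1 /\ exp 1 * rho_of m L * L <= m / 2.
Proof.
  intros Hm HL. pose proof (exp_pos 1) as He.
  assert (Hr : rho_of m L <= m / (2 * exp 1 * L)) by apply Rmin_r.
  split; [split|].
  - apply Rmin_glb; [lra|]. left; apply Rdiv_lt_0_compat; [lra | nra].
  - apply Rmin_l.
  - replace (m / 2) with (exp 1 * (m / (2 * exp 1 * L)) * L) by (field; lra).
    apply Rmult_le_compat_r; [lra|]. apply Rmult_le_compat_l; lra.
Qed.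

Lemma rho_of_lower rho m' L' : 0 <= rho <= 1 -> 0 < L' -> rho * L' <= m' ->
  rho_of m' L' >= rho / (2 * exp 1).
Proof.
  intros Hrho HL' Hm'. pose proof (exp_ineq1_le 1) as He.
  apply Rle_ge, Rmin_glb.
  - apply Rle_trans with (1 / (2 * exp 1)).
    + apply Rmult_le_compat_r; [left; apply Rinv_0_lt_compat|]; lra.
    + apply Rle_trans with (1 / 1); [|lra].
      apply Rmult_le_compat_l; [lra | apply Rinv_le_contravar; lra].
  - replace (rho / (2 * exp 1)) with (rho * L' / (2 * exp 1 * L')) by (field; lra).
    apply Rmult_le_compat_r; [left; apply Rinv_0_lt_compat; nra | exact Hm'].
Qed.

Lemma Cmod_eval2_le N c x y : Cmod (eval2 N c x y) <= l1norm2 N c.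
Proof.
  eapply Rle_trans; [apply Cmod_csum | apply rsum_le; intro j].
  eapply Rle_trans; [apply Cmod_csum | apply rsum_le; intro k].
  rewrite !Cmod_mul, !Cmod_ech; lra.
Qed.

Lemma Cmod_eval1_le N d y : Cmod (eval1 N d y) <= l1norm1 N d.
Proof.
  eapply Rle_trans; [apply Cmod_csum | apply rsum_le; intro k].
  rewrite !Cmod_mul, !Cmod_ech; lra.
Qed.

Lemma weighted_l1norm2_le N c (w : Z -> R) B :
  (forall j k, c j k <> C0 -> w j <= B) ->
  rsum (zrange N) (fun j => rsum (zrange N) (fun k => w j * Cmod (c j k))) <= B * l1norm2 N c.
Proof.
  intro Hw.
  change (l1norm2 N c) with (rsum (zrange N) (fun j => rsum (zrange N) (fun k => Cmod (c j k)))).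
  rewrite <- rsum_scal. apply rsum_le; intro j.
  rewrite <- rsum_scal. apply rsum_le; intro k.
  destruct (classic (c j k = C0)) as [-> | Hc].
  - rewrite Cmod_C0; lra.
  - apply Rmult_le_compat_r; [apply Cmod_ge0 | exact (Hw j k Hc)].
Qed.

Section GammaPolar.

Variables (N : nat) (c : Z -> Z -> Cx) (r phi : R).
Hypothesis Hr : 0 < r.

Let z : Cx := (r * cos phi, r * sin phi).
Let E (j : Z) : R := exp (IZR j * ln r).
Let x0 : R := phi / (2 * PI).

Lemma Gamma_decomposition y :
  eval1 N (Gamma z N c) y = Cadd (eval2 N c x0 y)
    (csum (zrange N) (fun j => csum (zrange N) (fun k =>
        scal (E j - 1) (Cmul (c j k) (Cmul (ech j x0) (ech k y)))))).
Proof.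
  change (eval1 N (Gamma z N c) y) with
    (csum (zrange N) (fun k => Cmul (csum (zrange N) (fun j => Cmul (Cpow z j) (c j k))) (ech k y))).
  change (eval2 N c x0 y) with
    (csum (zrange N) (fun j => csum (zrange N) (fun k => Cmul (c j k) (Cmul (ech j x0) (ech k y))))).
  rewrite (csum_ext _ _ (fun k => csum (zrange N) (fun j => Cmul (Cmul (Cpow z j) (c j k)) (ech k y))))
    by (intro k; apply csum_mulr).
  rewrite csum_swap, <- csum_add. apply csum_ext; intro j.
  rewrite <- csum_add. apply csum_ext; intro k.
  unfold z, E, x0. rewrite Cpow_polar by exact Hr.
  destruct (c j k) as [a b], (ech k y) as [p q], (ech j (phi / (2 * PI))) as [u v].
  unfold Cmul, Cadd, scal; simpl. f_equal; ring.
Qed.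

Lemma Gamma_perturbation_le delta y :
  (forall j k, c j k <> C0 -> Rabs (E j - 1) <= delta) ->
  Cmod (csum (zrange N) (fun j => csum (zrange N) (fun k =>
        scal (E j - 1) (Cmul (c j k) (Cmul (ech j x0) (ech k y)))))) <= delta * l1norm2 N c.
Proof.
  intro Hd. eapply Rle_trans; [|apply (weighted_l1norm2_le N c (fun j => Rabs (E j - 1))); exact Hd].
  eapply Rle_trans; [apply Cmod_csum | apply rsum_le; intro j].
  eapply Rle_trans; [apply Cmod_csum | apply rsum_le; intro k].
  rewrite Cmod_scal, !Cmod_mul, !Cmod_ech; lra.
Qed.

Lemma Gamma_near_slice delta y :
  (forall j k, c j k <> C0 -> Rabs (E j - 1) <= delta) ->
  Rabs (Cre (eval1 N (Gamma z N c) y) - Cre (eval2 N c x0 y)) <= delta * l1norm2 N c /\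
  Cmod (eval1 N (Gamma z N c) y) <= Cmod (eval2 N c x0 y) + delta * l1norm2 N c.
Proof.
  intro Hd. pose proof (Gamma_perturbation_le delta y Hd) as Hw.
  rewrite Gamma_decomposition. set (w := csum (zrange N) _) in *.
  split.
  - replace (Cre (Cadd (eval2 N c x0 y) w) - Cre (eval2 N c x0 y)) with (Cre w)
      by (unfold Cre, Cadd; simpl; ring).
    eapply Rle_trans; [apply Rabs_Cre_le | exact Hw].
  - eapply Rle_trans; [apply Cmod_add | lra].
Qed.

Lemma Gamma_l1norm_le B :
  (forall j k, c j k <> C0 -> E j <= B) -> l1norm1 N (Gamma z N c) <= B * l1norm2 N c.
Proof.
  intro HB. eapply Rle_trans; [|apply (weighted_l1norm2_le N c E); exact HB].
  change (l1norm1 N (Gamma z N c)) with (rsum (zrange N) (fun k => Cmod (Gamma z N c k))).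
  rewrite rsum_swap. apply rsum_le; intro k.
  eapply Rle_trans; [apply Cmod_csum | apply rsum_le; intro j].
  unfold z. rewrite Cmod_mul, Cpow_polar, Cmod_scal, Cmod_ech, Rabs_pos_eq by
    (try exact Hr; left; apply exp_pos).
  right; unfold E; ring.
Qed.

End GammaPolar.

Theorem mainTheorem11 :
  forall (N : nat) (c : Z -> Z -> Cx) (n1 : Z) (m M : R),
    supported2 N c ->
    (forall x y, Cim (eval2 N c x y) = 0 /\ 0 < Cre (eval2 N c x y)) ->
    is_n1 c n1 -> (1 <= n1)%Z ->
    is_min2 (fun x y => Cre (eval2 N c x y)) m ->
    is_sup2 (fun x y => Cmod (eval2 N c x y)) M ->
    let sigma1 := rho_of m (l1norm2 N c) / IZR n1 in
    forall z : Cx,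
      exp (- sigma1) <= Cmod z <= exp sigma1 ->
      (forall x, m / 2 <= Cre (eval1 N (Gamma z N c) x)) /\
      (forall x, Cmod (eval1 N (Gamma z N c) x) <= M + m / 2) /\
      (forall m' : R, is_min1 (fun x => Cre (eval1 N (Gamma z N c) x)) m' ->
         rho_of m' (l1norm1 N (Gamma z N c)) >= rho_of m (l1norm2 N c) / (2 * exp 1)).
Proof.
  intros N c n1 m M _ Hpos [_ Hn1] Hn1ge [Hmin [x1 [y1 Hm1]]] [HM _] sigma1 z Hz.
  cbv beta in Hmin, Hm1, HM.
  assert (Hm : 0 < m) by (rewrite <- Hm1; apply Hpos).
  assert (HmL : m <= l1norm2 N c)
    by (rewrite <- Hm1; eapply Rle_trans; [apply Cre_le_Cmod | apply Cmod_eval2_le]).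
  set (L := l1norm2 N c) in *.
  destruct (rho_of_bounds m L) as [Hrho Hdelta]; [lra | lra |].
  set (rho := rho_of m L) in *.
  destruct (annulus_ln (Cmod z) sigma1 Hz) as [Hr Hlnr].
  destruct (polar z Hr) as [phi Hphi]. rewrite Hphi.
  set (x0 := phi / (2 * PI)). set (g := Gamma (Cmod z * cos phi, Cmod z * sin phi) N c).
  pose proof (fun j k Hc => radial_factor_bounds j n1 (Cmod z) rho (Hn1 j k Hc) Hn1ge
                              (proj2 Hrho) Hlnr) as Hfactor.
  pose proof (fun y => Gamma_near_slice N c _ phi Hr (exp 1 * rho) y
                         (fun j k Hc => proj1 (Hfactor j k Hc))) as Hslice.
  pose proof (Gamma_l1norm_le N c _ phi Hr (exp 1) (fun j k Hc => proj2 (Hfactor j k Hc))) as HL.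
  fold x0 g L in Hslice, HL.
  assert (P1 : forall y, m / 2 <= Cre (eval1 N g y)).
  { intro y. destruct (Hslice y) as [Hre _]. pose proof (Hmin x0 y).
    apply Rcomplements.Rabs_le_between' in Hre; lra. }
  split; [exact P1|]. split.
  - intro y. destruct (Hslice y) as [_ Hmod].
    assert (Cmod (eval2 N c x0 y) <= M) by (apply HM; eauto). lra.
  - intros m' [_ [x2 Hx2]]. rewrite <- Hx2.
    pose proof (Rle_trans _ _ _ (Cre_le_Cmod _) (Cmod_eval1_le N g x2)) as HL'.
    pose proof (P1 x2).
    apply rho_of_lower; [exact Hrho | lra | nra].
Qed.
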